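(* Let $f:\mathbb{R}^d\to\mathbb{R}$ be twice differentiable, $\mu$-strongly convex and $\alpha$-smooth ($0<\mu\le\alpha$), and suppose its Hessian is $\alpha$-Lipschitz, i.e. $\|\nabla^2f(u)-\nabla^2f(v)\|_2\le\alpha\|u-v\|$ for all $u,v$. Let $\kappa:=\alpha/\mu$ and $w_*:=\arg\min_w f(w)$. Let $(w_t)$ be generated by gradient descent with Polyak's momentum on $f$ with step size $\eta=1/\alpha$ and momentum parameter $\beta=(1-\tfrac{1}{2\sqrt\kappa})^2$, from initial points satisfying $$\left\|\begin{bmatrix}w_0-w_*\\ w_{-1}-w_*\end{bmatrix}\right\|\le\frac{1}{683\,\kappa^{3/2}}.$$ Then for every $t\ge0$, $$\left\|\begin{bmatrix}w_{t+1}-w_*\\ w_t-w_*\end{bmatrix}\right\|\le\Big(1-\frac{1}{4\sqrt\kappa}\Big)^{t+1}8\sqrt\kappa\left\|\begin{bmatrix}w_0-w_*\\ w_{-1}-w_*\end{bmatrix}\right\|.$$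
   Context: Gradient descent with Polyak's momentum (heavy ball): $w_{t+1}=w_t-\eta\nabla f(w_t)+\beta(w_t-w_{t-1})$ for $t\ge0$, given $w_0$ and $w_{-1}$ (in the algorithm $w_{-1}=w_0$). $\|\cdot\|_2$ is the spectral norm. *)

From HB Require Import structures.
From mathcomp Require Import all_boot all_order all_algebra.
From mathcomp Require Import all_classical all_reals all_analysis.
Set Implicit Arguments. Unset Strict Implicit. Unset Printing Implicit Defensive.
Import Order.TTheory GRing.Theory Num.Theory.
Import numFieldNormedType.Exports.
Local Open Scope ring_scope.
Local Open Scope classical_set_scope.

Definition dotv (R : realType) (n : nat) (u v : 'cV[R]_n) : R :=
  \sum_(i < n) u i 0 * v i 0.
Definition enorm (R : realType) (n : nat) (v : 'cV[R]_n) : R :=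
  Num.sqrt (dotv v v).

Definition specnorm (R : realType) (n : nat) (A : 'M[R]_n) : R :=
  sup [set enorm (A *m x) | x in [set x : 'cV[R]_n | enorm x <= 1]].

Definition is_gradient (R : realType) (n : nat) (f : 'cV[R]_n -> R)
  (grad : 'cV[R]_n -> 'cV[R]_n) : Prop :=
  forall x, differentiable f x /\ forall h, 'd f x h = dotv (grad x) h.

Definition is_hessian (R : realType) (n : nat) (grad : 'cV[R]_n -> 'cV[R]_n)
  (hess : 'cV[R]_n -> 'M[R]_n) : Prop :=
  forall x, differentiable grad x /\ forall h, 'd grad x h = hess x *m h.

Definition strongly_convex (R : realType) (n : nat) (mu : R) (f : 'cV[R]_n -> R)
  (grad : 'cV[R]_n -> 'cV[R]_n) : Prop :=
  forall x y, f x + dotv (grad x) (y - x) + mu / 2 * enorm (y - x) ^+ 2 <= f y.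

Definition smooth (R : realType) (n : nat) (alpha : R)
  (grad : 'cV[R]_n -> 'cV[R]_n) : Prop :=
  forall x y, enorm (grad x - grad y) <= alpha * enorm (x - y).

Definition prev (R : realType) (n : nat) (wm1 : 'cV[R]_n) (w : nat -> 'cV[R]_n)
  (t : nat) : 'cV[R]_n :=
  if t is t'.+1 then w t' else wm1.

Definition heavy_ball (R : realType) (n : nat) (grad : 'cV[R]_n -> 'cV[R]_n)
  (eta beta : R) (wm1 : 'cV[R]_n) (w : nat -> 'cV[R]_n) : Prop :=
  forall t, w t.+1 = w t - eta *: grad (w t) + beta *: (w t - prev wm1 w t).

(* Put s := 1 / (2 sqrt kappa), so that beta = (1 - s)^2 and mu = 4 s^2 alpha,
   and let H := hess w* and A := (1 + beta) I - eta H.  Writing x_t := w_t - w*,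
   one step reads x_{t+1} = A x_t - beta x_{t-1} + r_t with a remainder
   |r_t| <= |x_t|^2 (second-order Taylor expansion of the gradient at the minimizer).
   Rather than diagonalizing the 2d x 2d iteration matrix we use the Lyapunov
   function  Q(u, v) := |u|^2 - <A u, v> + beta |v|^2,  which the linear part
   contracts exactly by beta, Q(A u - beta v, u) = beta Q(u, v), and which is
   equivalent to the squared norm: s^2/4 (|u|^2+|v|^2) <= Q <= 2 (|u|^2+|v|^2),
   because beta I <= A <= (1 + beta - 4 s^2) I.  As long as Q_t <= s^6 / 64 the
   remainder only degrades beta = (1 - s)^2 to (1 - s/2)^2; the initial radius
   guarantees this at t = 0, and induction gives Q_t <= (1 - s/2)^(2t) Q_0. *)

From Pilot Require Import Defs.
From HB Require Import structures.
From mathcomp Require Import all_boot all_order all_algebra.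
From mathcomp Require Import all_classical all_reals all_analysis.
From mathcomp Require Import ring lra.
Import Order.TTheory GRing.Theory Num.Theory.
Import numFieldNormedType.Exports.
Set Implicit Arguments. Unset Strict Implicit. Unset Printing Implicit Defensive.
Local Open Scope ring_scope.

(* A quadratic t |-> A + 2 t B + t^2 C that is nonnegative everywhere has a
   nonpositive discriminant; this gives every Cauchy-Schwarz inequality below. *)
Lemma nonneg_quadratic_discr (R : realFieldType) (A B C : R) : 0 <= C ->
  (forall t, 0 <= A + 2 * t * B + t ^+ 2 * C) -> B ^+ 2 <= A * C.
Proof.
move=> C0 hq.
have [Cpos|] := ltrP 0 C.
  have := hq (- B / C).
  have -> : A + 2 * (- B / C) * B + (- B / C) ^+ 2 * C = (A * C - B ^+ 2) / C.
    by field; rewrite gt_eqF.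
  by rewrite pmulr_lge0 ?invr_gt0 // subr_ge0.
move=> Cle0; have C00 : C = 0 by apply/le_anti; rewrite Cle0 C0.
rewrite C00 mulr0; have [->|BN0] := eqVneq B 0; first by rewrite expr0n.
have := hq (- (A + 1) / (2 * B)).
have -> : A + 2 * (- (A + 1) / (2 * B)) * B + (- (A + 1) / (2 * B)) ^+ 2 * C = -1.
  by rewrite C00 mulr0 addr0; field.
by rewrite ler0N1.
Qed.

Lemma le_of_forall_pos (R : realFieldType) (a b x : R) : 0 <= b ->
  (forall t, 0 < t -> a - t * b <= x) -> a <= x.
Proof.
move=> b0 h; rewrite leNgt; apply/negP => xa.
have tp : 0 < (a - x) / (b + 1) by rewrite divr_gt0 // ?subr_gt0 // ltr_wpDl.
have := h _ tp; apply/negP; rewrite -ltNge.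
have -> : a - (a - x) / (b + 1) * b = x + (a - x) / (b + 1).
  by field; rewrite gt_eqF // ltr_wpDl.
by rewrite ltrDl.
Qed.

Section EuclideanInnerProduct.
Variables (R : realType) (n : nat).
Implicit Types u v w : 'cV[R]_n.

Lemma dotvC u v : dotv u v = dotv v u.
Proof. by apply: eq_bigr => i _; rewrite mulrC. Qed.

Lemma dotvDl u v w : dotv (u + v) w = dotv u w + dotv v w.
Proof. by rewrite /dotv -big_split; apply: eq_bigr => i _; rewrite mxE mulrDl. Qed.

Lemma dotvZl a u v : dotv (a *: u) v = a * dotv u v.
Proof. by rewrite /dotv mulr_sumr; apply: eq_bigr => i _; rewrite mxE mulrA. Qed.

Lemma dotvNl u v : dotv (- u) v = - dotv u v.
Proof. by rewrite -scaleN1r dotvZl mulN1r. Qed.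

Lemma dotvBl u v w : dotv (u - v) w = dotv u w - dotv v w.
Proof. by rewrite dotvDl dotvNl. Qed.

Lemma dotvDr u v w : dotv w (u + v) = dotv w u + dotv w v.
Proof. by rewrite !(dotvC w) dotvDl. Qed.

Lemma dotvZr a u v : dotv v (a *: u) = a * dotv v u.
Proof. by rewrite !(dotvC v) dotvZl. Qed.

Lemma dotvNr u v : dotv v (- u) = - dotv v u.
Proof. by rewrite !(dotvC v) dotvNl. Qed.

Lemma dotvBr u v w : dotv w (u - v) = dotv w u - dotv w v.
Proof. by rewrite dotvDr dotvNr. Qed.

Lemma dotv0l v : dotv 0 v = 0.
Proof. by rewrite -(scale0r 0) dotvZl mul0r. Qed.

Lemma dotvv_ge0 u : 0 <= dotv u u.
Proof. by apply: sumr_ge0 => i _; rewrite -expr2 sqr_ge0. Qed.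

Lemma enorm_sq u : enorm u ^+ 2 = dotv u u.
Proof. by rewrite /enorm sqr_sqrtr // dotvv_ge0. Qed.

Lemma enorm_ge0 u : 0 <= enorm u.
Proof. exact: sqrtr_ge0. Qed.

Lemma enorm0 : enorm (0 : 'cV[R]_n) = 0.
Proof. by rewrite /enorm dotv0l sqrtr0. Qed.

Lemma normr_coord_le u i : `|u i 0| <= enorm u.
Proof.
rewrite -ler_sqr ?nnegrE ?enorm_ge0 // enorm_sq /dotv (bigD1 i) //=.
rewrite real_normK ?num_real // expr2 lerDl.
by apply: sumr_ge0 => j _; rewrite -expr2 sqr_ge0.
Qed.

Lemma enorm_eq0 u : enorm u = 0 -> u = 0.
Proof.
move=> u0; apply/matrixP => i j; rewrite ord1 mxE; apply/eqP; rewrite -normr_eq0.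
by apply/eqP/le_anti; rewrite normr_ge0 andbT -u0 normr_coord_le.
Qed.

Lemma dotv_cauchy_schwarz u v : dotv u v ^+ 2 <= dotv u u * dotv v v.
Proof.
apply: nonneg_quadratic_discr; first exact: dotvv_ge0.
move=> t; have := dotvv_ge0 (u + t *: v).
by rewrite !(dotvDl, dotvDr, dotvZl, dotvZr) (dotvC v u) => h; lra.
Qed.

Lemma normr_dotv_le u v : `|dotv u v| <= enorm u * enorm v.
Proof.
rewrite -ler_sqr ?nnegrE ?mulr_ge0 ?enorm_ge0 //.
by rewrite real_normK ?num_real // exprMn !enorm_sq dotv_cauchy_schwarz.
Qed.

Lemma dotv_le u v : dotv u v <= enorm u * enorm v.
Proof. exact: le_trans (ler_norm _) (normr_dotv_le _ _). Qed.

Lemma enormZ a u : enorm (a *: u) = `|a| * enorm u.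
Proof.
rewrite /enorm dotvZl dotvZr mulrA -expr2 -real_normK ?num_real //.
by rewrite sqrtrM ?sqr_ge0 // sqrtr_sqr normr_id.
Qed.

Lemma enormN u : enorm (- u) = enorm u.
Proof. by rewrite -scaleN1r enormZ normrN1 mul1r. Qed.

Lemma enormD u v : enorm (u + v) <= enorm u + enorm v.
Proof.
rewrite -ler_sqr ?nnegrE ?addr_ge0 ?enorm_ge0 //.
rewrite enorm_sq sqrrD !enorm_sq !(dotvDl, dotvDr) (dotvC v u).
have := dotv_le u v; lra.
Qed.

End EuclideanInnerProduct.

Lemma enorm_col_mx (R : realType) (n : nat) (u v : 'cV[R]_n) :
  enorm (col_mx u v) ^+ 2 = enorm u ^+ 2 + enorm v ^+ 2.
Proof.
have dotv_col : dotv (col_mx u v) (col_mx u v) = dotv u u + dotv v v.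
  rewrite /dotv big_split_ord /=.
  by congr (_ + _); apply: eq_bigr => i _; rewrite ?col_mxEu ?col_mxEd.
by rewrite !enorm_sq dotv_col.
Qed.


Section SpectralNorm.
Local Open Scope classical_set_scope.
Variables (R : realType) (n : nat).

(* A crude l1 bound, enough to see that the spectral norm is finite. *)
Lemma enorm_le_sum (u : 'cV[R]_n) : enorm u <= \sum_i `|u i 0|.
Proof.
rewrite -ler_sqr ?nnegrE ?enorm_ge0 ?sumr_ge0 // enorm_sq expr2 /dotv mulr_suml.
apply: ler_sum => i _; apply: le_trans (ler_norm _) _.
by rewrite normrM ler_wpM2l ?normr_ge0 // (bigD1 i) //= lerDl sumr_ge0.
Qed.

(* The spectral norm bounds the action of a matrix; the defining supremum is
   finite since |A x| <= sum_ij |A_ij| on the unit ball. *)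
Lemma enorm_mulmx_le (A : 'M[R]_n) (x : 'cV[R]_n) :
  enorm (A *m x) <= specnorm A * enorm x.
Proof.
set E := [set enorm (A *m y) | y in [set y : 'cV[R]_n | enorm y <= 1]].
have E0 : E (enorm (A *m 0)) by exists 0 => //=; rewrite enorm0.
have ub : forall r, E r -> r <= specnorm A.
  apply: sup_upper_bound; split; first by exists (enorm (A *m 0)).
  exists (\sum_i \sum_j `|A i j|) => _ [y /= y1 <-].
  apply: le_trans (enorm_le_sum _) _; apply: ler_sum => i _.
  rewrite mxE; apply: le_trans (ler_norm_sum _ _ _) _; apply: ler_sum => j _.
  by rewrite normrM ler_piMr ?normr_ge0 // (le_trans (normr_coord_le _ _) y1).
have [x0|xn0] := eqVneq (enorm x) 0.
  by rewrite (enorm_eq0 x0) mulmx0 enorm0 mulr0.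
have xpos : 0 < enorm x by rewrite lt_def xn0 enorm_ge0.
have nx_ge0 : 0 <= (enorm x)^-1 by rewrite invr_ge0 enorm_ge0.
rewrite -ler_pdivrMr // mulrC -(ger0_norm nx_ge0) -enormZ scalemxAr.
apply: ub; exists ((enorm x)^-1 *: x) => //=.
by rewrite enormZ ger0_norm // mulVf.
Qed.

End SpectralNorm.

Section DerivativesAlongLines.
Variables (R : realType) (n : nat).

Lemma is_derive_along_line (W : normedModType R) (G : 'cV[R]_n -> W) p q (t : R) :
  derivable G (p + t *: q) q ->
  is_derive t 1 (fun s => G (p + s *: q)) ('D_q G (p + t *: q)).
Proof.
have E : (fun h : R => h^-1 *: (((fun s => G (p + s *: q)) \o shift t) (h *: 1)
            - G (p + t *: q))) =
         (fun h : R => h^-1 *: ((G \o shift (p + t *: q)) (h *: q) - G (p + t *: q))).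
  by apply/funext => h /=; rewrite /shift /= [h *: 1]mulr1 scalerDl addrCA.
by move=> dG; split; [rewrite /derivable E | rewrite /derive E].
Qed.

Lemma is_derive_coord (M : R -> 'cV[R]_n) (t : R) (dM : 'cV[R]_n) (i : 'I_n) :
  is_derive t 1 M dM -> is_derive t 1 (fun s => M s i 0) (dM i 0).
Proof.
move=> dMt; have dv : derivable M t 1 by case: dMt.
split; first exact: ((derivable_mxP M t 1).1 dv i 0).
by have := derive_mx dv; rewrite derive_val => ->; rewrite mxE.
Qed.

Lemma is_derive_dotv (M : R -> 'cV[R]_n) (t : R) (dM k : 'cV[R]_n) :
  is_derive t 1 M dM -> is_derive t 1 (fun s => dotv (M s) k) (dotv dM k).
Proof.
move=> dMt.
have -> : (fun s => dotv (M s) k) = \sum_(i < n) (fun s => k i 0 *: M s i 0).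
  rewrite fct_sumE; apply/funext => s.
  by apply: eq_bigr => i _; rewrite /GRing.scale /= mulrC.
have -> : dotv dM k = \sum_(i < n) k i 0 *: dM i 0.
  by apply: eq_bigr => i _; rewrite /GRing.scale /= mulrC.
by apply: is_derive_sum => i; apply: is_deriveZ; exact: is_derive_coord.
Qed.

Lemma is_derive_f_line (f : 'cV[R]_n -> R) grad p q (t : R) : is_gradient f grad ->
  is_derive t 1 (fun s => f (p + s *: q)) (dotv (grad (p + t *: q)) q).
Proof.
move=> hg; have [df dfE] := hg (p + t *: q).
by rewrite -dfE -deriveE //; apply: is_derive_along_line; exact: diff_derivable.
Qed.

Lemma is_derive_grad_line (grad : 'cV[R]_n -> 'cV[R]_n) hess p q (t : R) k :
  is_hessian grad hess ->
  is_derive t 1 (fun s => dotv (grad (p + s *: q)) k) (dotv (hess (p + t *: q) *m q) k).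
Proof.
move=> hh; have [dg dgE] := hh (p + t *: q).
apply: (@is_derive_dotv (fun s => grad (p + s *: q))).
by rewrite -dgE -deriveE //; apply: is_derive_along_line; exact: diff_derivable.
Qed.

End DerivativesAlongLines.

Lemma mvt_total (R : realType) (phi dphi : R -> R) (a b : R) : a < b ->
  (forall x : R, is_derive x 1 phi (dphi x)) ->
  exists2 c, a < c < b & phi b - phi a = dphi c * (b - a).
Proof.
move=> ab hd.
have cont : {within `[a, b], continuous phi}%classic.
  by apply: derivable_within_continuous => x _; case: (hd x).
have [c cab ->] := MVT ab (fun x _ => hd x) cont.
by exists c => //; move: cab; rewrite in_itv.
Qed.

Section GeometryAtMinimizer.
Variables (R : realType) (n : nat).
Variables (f : 'cV[R]_n -> R) (grad : 'cV[R]_n -> 'cV[R]_n) (hess : 'cV[R]_n -> 'M[R]_n).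
Variables (mu alpha : R) (wstar : 'cV[R]_n).
Hypothesis mu_gt0 : 0 < mu.
Hypothesis mu_le_alpha : mu <= alpha.
Hypothesis f_grad : is_gradient f grad.
Hypothesis grad_hess : is_hessian grad hess.
Hypothesis f_sconvex : strongly_convex mu f grad.
Hypothesis f_smooth : smooth alpha grad.
Hypothesis hess_lipschitz :
  forall u v, specnorm (hess u - hess v) <= alpha * enorm (u - v).
Hypothesis wstar_min : forall v, f wstar <= f v.

Lemma alpha_gt0 : 0 < alpha.
Proof. exact: lt_le_trans mu_gt0 mu_le_alpha. Qed.

(* Second-order Taylor bound for the gradient, from the Lipschitz Hessian:
   apply the mean value theorem to s |-> <grad (p + s q) - s H(p) q, e>
   where e is the Taylor error itself. *)
Lemma grad_taylor p q :
  enorm (grad (p + q) - grad p - hess p *m q) <= alpha * enorm q ^+ 2.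
Proof.
set e := grad (p + q) - grad p - hess p *m q.
set c := dotv (hess p *m q) e.
pose psi s := dotv (grad (p + s *: q)) e - s * c.
have hd (x : R) : is_derive x 1 psi (dotv (hess (p + x *: q) *m q) e - c).
  apply: is_deriveB; first exact: is_derive_grad_line.
  have -> : (fun s : R => s * c) = c \*: id by apply/funext => s; rewrite /= mulrC.
  by rewrite -[X in is_derive _ _ _ X]mulr1; apply: is_deriveZ.
have [x /andP[x0 x1]] := mvt_total ltr01 hd.
rewrite /psi subr0 mulr1 scale1r scale0r addr0 mul1r mul0r subr0.
have -> : dotv (grad (p + q)) e - c - dotv (grad p) e = dotv e e.
  by rewrite /e /c !dotvBl; ring.
rewrite /c -dotvBl -mulmxBl => hee.
have : enorm e ^+ 2 <= alpha * enorm q ^+ 2 * enorm e.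
  rewrite enorm_sq hee; apply: le_trans (dotv_le _ _) _.
  rewrite ler_wpM2r ?enorm_ge0 //; apply: le_trans (enorm_mulmx_le _ _) _.
  rewrite expr2 mulrA ler_wpM2r ?enorm_ge0 //; apply: le_trans (hess_lipschitz _ _) _.
  rewrite addrC addKr enormZ (ger0_norm (ltW x0)).
  by rewrite ler_wpM2l ?(ltW alpha_gt0) // ler_piMl ?enorm_ge0 // ltW.
have [->|en0] := eqVneq (enorm e) 0.
  by move=> _; rewrite mulr_ge0 ?sqr_ge0 ?(ltW alpha_gt0).
by rewrite expr2 ler_pM2r // lt_def en0 enorm_ge0.
Qed.

(* First-order optimality: the gradient vanishes at the minimizer.  Compare f
   at w* and at the gradient step w* - g/(2 alpha) using strong convexity and
   smoothness. *)
Lemma grad_wstar : grad wstar = 0.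
Proof.
set g := grad wstar; set s := 1 / (2 * alpha).
have s0 : 0 < s by rewrite divr_gt0 // mulr_gt0 // alpha_gt0.
have as1 : alpha * s = 1 / 2 by rewrite /s; field; rewrite gt_eqF // alpha_gt0.
set x := wstar - s *: g.
have e1 : wstar - x = s *: g by rewrite /x opprB addrC subrK.
have conv := f_sconvex x wstar; rewrite e1 dotvZr in conv.
have lip := f_smooth wstar x; rewrite e1 enormZ ger0_norm ?(ltW s0) // -/g in lip.
have cs := dotv_le (g - grad x) g; rewrite dotvBl in cs.
have gg := enorm_sq g; have g0 := enorm_ge0 g.
have hx : s * dotv (grad x) g <= 0.
  have := wstar_min x; have : 0 <= mu / 2 * enorm (s *: g) ^+ 2.
    by rewrite mulr_ge0 ?sqr_ge0 // divr_ge0 // ltW.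
  lra.
have hgx : dotv g g - (alpha * s) * enorm g ^+ 2 <= dotv (grad x) g.
  by have := ler_wpM2r g0 lip; rewrite expr2; lra.
have : s * (dotv g g / 2) <= 0.
  apply: (le_trans _ hx); rewrite ler_pM2l //; apply: (le_trans _ hgx).
  by rewrite as1 gg; lra.
rewrite pmulr_rle0 // => hgg; apply: enorm_eq0; apply/eqP.
by rewrite -sqrf_eq0 gg eq_le dotvv_ge0 andbT; lra.
Qed.

Lemma grad_strongly_monotone x y :
  mu * enorm (y - x) ^+ 2 <= dotv (grad y - grad x) (y - x).
Proof.
have h1 := f_sconvex x y; have h2 := f_sconvex y x.
rewrite -opprB enormN dotvNr in h2.
by rewrite dotvBl; lra.
Qed.

Lemma grad_taylor_wstar v :
  enorm (grad (wstar + v) - hess wstar *m v) <= alpha * enorm v ^+ 2.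
Proof. by have := grad_taylor wstar v; rewrite grad_wstar subr0. Qed.

Lemma grad_taylor_wstar_dotv v h :
  `|dotv (grad (wstar + v) - hess wstar *m v) h| <= alpha * enorm v ^+ 2 * enorm h.
Proof.
apply: le_trans (normr_dotv_le _ _) _.
by apply: ler_wpM2r; [exact: enorm_ge0 | exact: grad_taylor_wstar].
Qed.

(* Along the ray w* + t q, the gradient's q-component is t <H q, q> up to
   O(t^2); dividing by t and letting t -> 0 transfers bounds to H. *)
Lemma grad_ray_wstar q t : 0 < t ->
  `|dotv (grad (wstar + t *: q)) q - t * dotv (hess wstar *m q) q|
    <= alpha * t ^+ 2 * enorm q ^+ 3.
Proof.
move=> t0; have := grad_taylor_wstar_dotv (t *: q) q.
rewrite -scalemxAr dotvBl dotvZl enormZ (ger0_norm (ltW t0)).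
by have -> : alpha * (t * enorm q) ^+ 2 * enorm q = alpha * t ^+ 2 * enorm q ^+ 3
  by ring.
Qed.

Lemma hess_wstar_lower q : mu * dotv q q <= dotv (hess wstar *m q) q.
Proof.
rewrite -enorm_sq; set h := dotv (hess wstar *m q) q.
apply: (@le_of_forall_pos _ _ (alpha * enorm q ^+ 3)).
  by rewrite mulr_ge0 ?exprn_ge0 ?enorm_ge0 ?(ltW alpha_gt0).
move=> t t0; move: (grad_ray_wstar q t0).
rewrite ler_norml => /andP[_]; rewrite -/h => hray.
have hmono := grad_strongly_monotone wstar (wstar + t *: q).
rewrite addrC addKr grad_wstar subr0 dotvZr enormZ (ger0_norm (ltW t0)) in hmono.
have : t * (t * (mu * enorm q ^+ 2)) <= t * (t * (h + t * (alpha * enorm q ^+ 3))).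
  apply: le_trans (_ : _ <= t * dotv (grad (wstar + t *: q)) q) _; first lra.
  by rewrite ler_pM2l //; lra.
by rewrite !ler_pM2l //; lra.
Qed.

Lemma hess_wstar_upper q : dotv (hess wstar *m q) q <= alpha * dotv q q.
Proof.
rewrite -enorm_sq; set h := dotv (hess wstar *m q) q.
apply: (@le_of_forall_pos _ _ (alpha * enorm q ^+ 3)).
  by rewrite mulr_ge0 ?exprn_ge0 ?enorm_ge0 ?(ltW alpha_gt0).
move=> t t0; move: (grad_ray_wstar q t0).
rewrite ler_norml => /andP[+ _]; rewrite -/h => hray.
have hlip := f_smooth (wstar + t *: q) wstar.
rewrite grad_wstar subr0 addrAC subrr add0r enormZ (ger0_norm (ltW t0)) in hlip.
have hcs := dotv_le (grad (wstar + t *: q)) q.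
have hgq := ler_wpM2r (enorm_ge0 q) hlip.
have : t * (h - t * (alpha * enorm q ^+ 3)) <= t * (alpha * enorm q ^+ 2) by lra.
by rewrite ler_pM2l.
Qed.

(* The symmetric second difference of f at w* in the directions h and k; it is
   symmetric in (h, k) and equals s^2 <H k, h> + O(s^3), whence H is symmetric. *)
Definition second_diff (h k : 'cV[R]_n) (s : R) : R :=
  f (wstar + s *: k + s *: h) - f (wstar + s *: h) - f (wstar + s *: k) + f wstar.

Lemma second_diff_sym h k s : second_diff h k s = second_diff k h s.
Proof.
rewrite /second_diff.
have -> : wstar + s *: h + s *: k = wstar + s *: k + s *: h by rewrite addrAC.
by ring.
Qed.

Lemma second_diff_mvt h k s : 0 < s -> exists2 c, 0 < c < s &
  second_diff h k s = s * dotv (grad (wstar + s *: k + c *: h) - grad (wstar + c *: h)) h.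
Proof.
move=> s0; pose phi t := f (wstar + s *: k + t *: h) - f (wstar + t *: h).
have hd (x : R) : is_derive x 1 phi
    (dotv (grad (wstar + s *: k + x *: h)) h - dotv (grad (wstar + x *: h)) h).
  exact: is_deriveB (is_derive_f_line _ _ _ f_grad) (is_derive_f_line _ _ _ f_grad).
have [c cs hc] := mvt_total s0 hd; exists c => //.
move: hc; rewrite /phi /second_diff !scale0r !addr0 subr0 -dotvBl => hc.
by rewrite [s * _]mulrC -hc; ring.
Qed.

Lemma second_diff_approx h k s : 0 < s ->
  `|second_diff h k s - s ^+ 2 * dotv (hess wstar *m k) h|
    <= s ^+ 3 * (2 * alpha * (enorm h + enorm k) ^+ 3).
Proof.
move=> s0; have [c /andP[c0 cs] ->] := second_diff_mvt h k s0.
set r := enorm h + enorm k; set H := hess wstar.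
have nh := enorm_ge0 h; have nk := enorm_ge0 k.
(* both Taylor errors are taken at points of norm at most s r *)
have err v : enorm v <= s * r ->
    `|dotv (grad (wstar + v) - H *m v) h| <= alpha * (s * r) ^+ 2 * r.
  move=> hv; apply: le_trans (grad_taylor_wstar_dotv v h) _.
  apply: ler_pM; rewrite ?mulr_ge0 ?sqr_ge0 ?enorm_ge0 ?(ltW alpha_gt0) //.
    rewrite ler_pM2l ?alpha_gt0 // lerXn2r // nnegrE ?enorm_ge0 //.
    by rewrite mulr_ge0 ?(ltW s0) // addr_ge0.
  by rewrite /r lerDl.
have e1 : enorm (s *: k + c *: h) <= s * r.
  apply: le_trans (enormD _ _) _.
  by rewrite !enormZ (ger0_norm (ltW s0)) (ger0_norm (ltW c0)) /r; nra.
have e2 : enorm (c *: h) <= s * r by rewrite enormZ (ger0_norm (ltW c0)) /r; nra.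
have -> : s * dotv (grad (wstar + s *: k + c *: h) - grad (wstar + c *: h)) h
    - s ^+ 2 * dotv (H *m k) h =
    s * (dotv (grad (wstar + (s *: k + c *: h)) - H *m (s *: k + c *: h)) h
         - dotv (grad (wstar + c *: h) - H *m (c *: h)) h).
  by rewrite addrA mulmxDr -!scalemxAr !dotvBl dotvDl !dotvZl; ring.
rewrite normrM (ger0_norm (ltW s0)).
have -> : s ^+ 3 * (2 * alpha * r ^+ 3) =
  s * (alpha * (s * r) ^+ 2 * r + alpha * (s * r) ^+ 2 * r) by ring.
rewrite ler_pM2l //; apply: le_trans (ler_normB _ _) _.
exact: lerD (err _ e1) (err _ e2).
Qed.

Lemma hess_wstar_sym u v : dotv (hess wstar *m u) v = dotv u (hess wstar *m v).
Proof.
rewrite (dotvC u); apply/eqP; rewrite -subr_eq0 -normr_le0.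
set X := dotv (hess wstar *m u) v; set Y := dotv (hess wstar *m v) u.
set r := enorm u + enorm v.
apply: (@le_of_forall_pos _ _ (4 * alpha * r ^+ 3)).
  by rewrite !mulr_ge0 ?exprn_ge0 ?addr_ge0 ?enorm_ge0 ?(ltW alpha_gt0).
move=> s s0; have d1 := second_diff_approx v u s0; have d2 := second_diff_approx u v s0.
rewrite second_diff_sym (addrC (enorm v)) -/X -/r in d1; rewrite -/Y -/r in d2.
set D := second_diff u v s in d1 d2.
have : s ^+ 2 * `|X - Y| <= s ^+ 2 * (s * (4 * alpha * r ^+ 3)).
  rewrite -[X in X * `|_|](ger0_norm (sqr_ge0 s)) -normrM mulrBr.
  have -> : s ^+ 2 * X - s ^+ 2 * Y = (D - s ^+ 2 * Y) - (D - s ^+ 2 * X) by ring.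
  have -> : s ^+ 2 * (s * (4 * alpha * r ^+ 3)) =
    s ^+ 3 * (2 * alpha * r ^+ 3) + s ^+ 3 * (2 * alpha * r ^+ 3) by ring.
  by apply: le_trans (ler_normB _ _) _; apply: lerD.
by rewrite ler_pM2l ?exprn_gt0 //; lra.
Qed.

End GeometryAtMinimizer.

(* With b := 1 + (1-s)^2 - 4 s^2, the binary quadratic form
   U^2 - b U V + (1-s)^2 V^2 is uniformly positive definite for 0 < s <= 1/2:
   completing the square leaves a discriminant s^2 (10 - 10 s - 39/4 s^2) >= 0. *)
Lemma lyap_form_lower (R : realFieldType) (s U V : R) : 0 < s -> s <= 1 / 2 ->
  s ^+ 2 / 4 * (U ^+ 2 + V ^+ 2)
    <= U ^+ 2 - (1 + (1 - s) ^+ 2 - 4 * s ^+ 2) * U * V + (1 - s) ^+ 2 * V ^+ 2.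
Proof.
move=> s0 s1; set b := 1 + (1 - s) ^+ 2 - 4 * s ^+ 2; set c := s ^+ 2 / 4.
set form := U ^+ 2 - b * U * V + (1 - s) ^+ 2 * V ^+ 2.
have c1 : 0 < 1 - c by rewrite /c; nra.
have discr : 0 <= 4 * (1 - c) * ((1 - s) ^+ 2 - c) - b ^+ 2.
  have -> : 4 * (1 - c) * ((1 - s) ^+ 2 - c) - b ^+ 2 =
    s ^+ 2 * (10 - 10 * s - 39 / 4 * s ^+ 2) by rewrite /b /c; field.
  by apply: mulr_ge0; [exact: sqr_ge0 | nra].
have square : 4 * (1 - c) * (form - c * (U ^+ 2 + V ^+ 2)) =
  (2 * (1 - c) * U - b * V) ^+ 2 + (4 * (1 - c) * ((1 - s) ^+ 2 - c) - b ^+ 2) * V ^+ 2.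
  by rewrite /form; ring.
have : 0 <= 4 * (1 - c) * (form - c * (U ^+ 2 + V ^+ 2)).
  by rewrite square addr_ge0 ?sqr_ge0 // mulr_ge0 ?sqr_ge0.
by rewrite pmulr_rge0 ?mulr_gt0 //; lra.
Qed.

(* One perturbed step in scalar form: a level X contracted to (1-s)^2 X by the
   linear part, plus a cross term cr (controlled by Cauchy-Schwarz) and a
   quadratic remainder P^2 with P = O(X), lands below (1-s/2)^2 X as soon as
   X <= s^6/64, since then P <= s sqrt(X) / 2. *)
Lemma perturbed_contraction (R : rcfType) (s X P cr : R) : 0 < s -> s <= 1 / 2 ->
  0 <= X -> X <= s ^+ 6 / 64 -> 0 <= P -> P * s ^+ 2 <= 4 * X ->
  cr ^+ 2 <= 4 * ((1 - s) ^+ 2 * X) * P ^+ 2 ->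
  (1 - s) ^+ 2 * X + cr + P ^+ 2 <= (1 - s / 2) ^+ 2 * X.
Proof.
move=> s0 s1 X0 Xsmall P0 PX cr2.
set m := Num.sqrt X; have m0 : 0 <= m := sqrtr_ge0 _.
have mX : X = m ^+ 2 by rewrite sqr_sqrtr.
rewrite mX in Xsmall PX cr2 *.
have ms : m <= s ^+ 3 / 8.
  have h3 : 0 <= s ^+ 3 / 8 by rewrite divr_ge0 // exprn_ge0 // ltW.
  rewrite -ler_sqr ?nnegrE //.
  have -> : (s ^+ 3 / 8) ^+ 2 = s ^+ 6 / 64 by field.
  exact: Xsmall.
have Pm : P <= m * s / 2.
  have : P * s ^+ 2 <= (m * s / 2) * s ^+ 2 by apply: le_trans PX _; nra.
  by rewrite ler_pM2r ?exprn_gt0.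
have crb : cr <= 2 * (1 - s) * m * P.
  have h0 : 0 <= 2 * (1 - s) * m * P by rewrite !mulr_ge0 //; lra.
  rewrite leNgt; apply/negP => h.
  have : (2 * (1 - s) * m * P) ^+ 2 < cr ^+ 2.
    by rewrite ltr_pXn2r ?nnegrE //; apply: le_trans h0 (ltW h).
  have -> : (2 * (1 - s) * m * P) ^+ 2 = 4 * ((1 - s) ^+ 2 * m ^+ 2) * P ^+ 2 by ring.
  by rewrite ltNge cr2.
have h1 : (1 - s) * m + P <= (1 - s / 2) * m by nra.
have : ((1 - s) * m + P) ^+ 2 <= ((1 - s / 2) * m) ^+ 2.
  by rewrite ler_sqr ?nnegrE //; [nra | apply: le_trans h1; nra].
nra.
Qed.

Section LyapunovFunction.
Variables (R : realType) (n : nat) (alpha s : R) (H : 'M[R]_n).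
Hypothesis alpha_pos : 0 < alpha.
Hypothesis s_gt0 : 0 < s.
Hypothesis s_le_half : s <= 1 / 2.
Hypothesis H_sym : forall u v, dotv (H *m u) v = dotv u (H *m v).
Hypothesis H_lower : forall u, 4 * s ^+ 2 * alpha * dotv u u <= dotv (H *m u) u.
Hypothesis H_upper : forall u, dotv (H *m u) u <= alpha * dotv u u.

Local Notation beta := ((1 - s) ^+ 2).
Local Notation eta := (1 / alpha).
(* the spectrum of the momentum operator lies in [beta, bnd] *)
Local Notation bnd := (1 + (1 - s) ^+ 2 - 4 * s ^+ 2).

(* A := (1 + beta) I - eta H, so that a heavy-ball step on the quadratic model
   maps (x_t, x_{t-1}) to (A x_t - beta x_{t-1}, x_t). *)
Fact momentum_op_key : unit. Proof. exact: tt. Qed.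
Definition momentum_op (u : 'cV[R]_n) : 'cV[R]_n :=
  locked_with momentum_op_key ((1 + beta) *: u - eta *: (H *m u)).

Lemma momentum_opE u : momentum_op u = (1 + beta) *: u - eta *: (H *m u).
Proof. by rewrite /momentum_op; case: momentum_op_key. Qed.

Lemma momentum_opD u v : momentum_op (u + v) = momentum_op u + momentum_op v.
Proof. by apply/matrixP => i j; rewrite !momentum_opE mulmxDr !mxE; ring. Qed.

Lemma momentum_opZ a u : momentum_op (a *: u) = a *: momentum_op u.
Proof. by apply/matrixP => i j; rewrite !momentum_opE -scalemxAr !mxE; ring. Qed.

Lemma momentum_op_sym u v : dotv (momentum_op u) v = dotv u (momentum_op v).
Proof. by rewrite !momentum_opE dotvBl dotvBr !dotvZl !dotvZr H_sym. Qed.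

Lemma momentum_op_lower u : beta * dotv u u <= dotv (momentum_op u) u.
Proof.
rewrite momentum_opE dotvBl !dotvZl.
have : eta * dotv (H *m u) u <= eta * (alpha * dotv u u).
  by rewrite ler_pM2l ?divr_gt0.
by rewrite mulrA mul1r mulVf ?gt_eqF //; lra.
Qed.

Lemma momentum_op_upper u : dotv (momentum_op u) u <= bnd * dotv u u.
Proof.
rewrite momentum_opE dotvBl !dotvZl.
have : eta * (4 * s ^+ 2 * alpha * dotv u u) <= eta * dotv (H *m u) u.
  by rewrite ler_pM2l ?divr_gt0.
have -> : eta * (4 * s ^+ 2 * alpha * dotv u u) = 4 * s ^+ 2 * dotv u u.
  by field; rewrite gt_eqF.
lra.
Qed.

Lemma bnd_ge0 : 0 <= bnd.
Proof. by have := s_gt0; have := s_le_half; nra. Qed.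

(* A is positive semidefinite, so <A u, v> obeys Cauchy-Schwarz; hence
   |<A u, v>| <= bnd |u| |v|. *)
Lemma momentum_op_cauchy_schwarz u v :
  dotv (momentum_op u) v ^+ 2 <= dotv (momentum_op u) u * dotv (momentum_op v) v.
Proof.
apply: nonneg_quadratic_discr.
  by apply: le_trans (momentum_op_lower _); rewrite mulr_ge0 ?sqr_ge0 ?dotvv_ge0.
move=> t; have := momentum_op_lower (u + t *: v).
have := mulr_ge0 (sqr_ge0 (1 - s)) (dotvv_ge0 (u + t *: v)).
rewrite momentum_opD momentum_opZ !(dotvDl, dotvDr, dotvZl, dotvZr).
by rewrite (momentum_op_sym v u) (dotvC v (momentum_op u)); lra.
Qed.

Lemma normr_momentum_op_le u v : `|dotv (momentum_op u) v| <= bnd * enorm u * enorm v.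
Proof.
rewrite -ler_sqr ?nnegrE ?mulr_ge0 ?enorm_ge0 ?bnd_ge0 //.
rewrite real_normK ?num_real //; apply: le_trans (momentum_op_cauchy_schwarz u v) _.
have Au0 w : 0 <= dotv (momentum_op w) w.
  by apply: le_trans (momentum_op_lower w); rewrite mulr_ge0 ?sqr_ge0 ?dotvv_ge0.
rewrite !exprMn !enorm_sq -mulrA [bnd ^+ 2]expr2 mulrACA.
by apply: ler_pM => //; apply: momentum_op_upper.
Qed.

(* The Lyapunov function of the heavy-ball iteration, on the pair
   (u, v) = (x_t, x_{t-1}). *)
Definition lyap (u v : 'cV[R]_n) : R :=
  dotv u u - dotv (momentum_op u) v + beta * dotv v v.

Lemma lyap_step u v : lyap (momentum_op u - beta *: v) u = beta * lyap u v.
Proof.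
rewrite /lyap momentum_opD -scaleNr momentum_opZ !(dotvDl, dotvDr, dotvZl, dotvZr).
rewrite (momentum_op_sym (momentum_op u) u) (momentum_op_sym v u).
by rewrite (dotvC v (momentum_op u)); ring.
Qed.

Lemma lyap_lower u v : s ^+ 2 / 4 * (dotv u u + dotv v v) <= lyap u v.
Proof.
rewrite /lyap -!enorm_sq.
have := lyap_form_lower (enorm u) (enorm v) s_gt0 s_le_half.
have := normr_momentum_op_le u v; rewrite ler_norml => /andP[_ h].
lra.
Qed.

Lemma lyap_ge0 u v : 0 <= lyap u v.
Proof.
apply: le_trans (lyap_lower u v).
by rewrite mulr_ge0 ?divr_ge0 ?sqr_ge0 ?addr_ge0 ?dotvv_ge0.
Qed.

Lemma lyap_upper u v : lyap u v <= 2 * (dotv u u + dotv v v).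
Proof.
rewrite /lyap -!enorm_sq.
have := normr_momentum_op_le u v; rewrite ler_norml => /andP[h _].
have hbeta : (1 - s) ^+ 2 <= 1 by have := s_gt0; have := s_le_half; nra.
have hbnd : bnd <= 2 by have := s_gt0; have := s_le_half; nra.
have nu := enorm_ge0 u; have nv := enorm_ge0 v.
have := sqr_ge0 (enorm u - enorm v); rewrite sqrrB.
have : bnd * enorm u * enorm v <= 2 * enorm u * enorm v.
  by rewrite -!mulrA ler_wpM2r ?mulr_ge0.
have : (1 - s) ^+ 2 * enorm v ^+ 2 <= enorm v ^+ 2 by rewrite ler_piMl ?sqr_ge0.
lra.
Qed.

(* Effect of a perturbation r of the first component; the cross term is
   controlled by a Cauchy-Schwarz inequality for the nonnegative form lyap. *)
Lemma lyap_perturb u v r : lyap (u + r) v =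
  lyap u v + (2 * dotv u r - dotv (momentum_op r) v) + dotv r r.
Proof. by rewrite /lyap momentum_opD !(dotvDl, dotvDr) (dotvC r u); ring. Qed.

Lemma lyap_cross u v r :
  (2 * dotv u r - dotv (momentum_op r) v) ^+ 2 <= 4 * lyap u v * dotv r r.
Proof.
set cr := 2 * dotv u r - dotv (momentum_op r) v.
have : (cr / 2) ^+ 2 <= lyap u v * dotv r r.
  apply: nonneg_quadratic_discr; first exact: dotvv_ge0.
  move=> t; have := lyap_ge0 (u + t *: r) v.
  rewrite lyap_perturb momentum_opZ dotvZr !dotvZl dotvZr.
  by rewrite /cr; lra.
have -> : cr ^+ 2 = 4 * (cr / 2) ^+ 2 by field.
by rewrite -mulrA ler_pM2l.
Qed.

End LyapunovFunction.

Section HeavyBallDynamics.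
Variables (R : realType) (n : nat).
Variables (f : 'cV[R]_n -> R) (grad : 'cV[R]_n -> 'cV[R]_n) (hess : 'cV[R]_n -> 'M[R]_n).
Variables (mu alpha s : R) (wstar wm1 : 'cV[R]_n) (w : nat -> 'cV[R]_n).
Hypothesis mu_gt0 : 0 < mu.
Hypothesis mu_le_alpha : mu <= alpha.
Hypothesis f_grad : is_gradient f grad.
Hypothesis grad_hess : is_hessian grad hess.
Hypothesis f_sconvex : strongly_convex mu f grad.
Hypothesis f_smooth : smooth alpha grad.
Hypothesis hess_lipschitz :
  forall u v, specnorm (hess u - hess v) <= alpha * enorm (u - v).
Hypothesis wstar_min : forall v, f wstar <= f v.
Hypothesis s_gt0 : 0 < s.
Hypothesis s_le_half : s <= 1 / 2.
Hypothesis mu_eq : mu = 4 * s ^+ 2 * alpha.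
Hypothesis w_heavy_ball : heavy_ball grad (1 / alpha) ((1 - s) ^+ 2) wm1 w.

Let H := hess wstar.
Let alpha_pos : 0 < alpha. Proof. exact: alpha_gt0 mu_gt0 mu_le_alpha. Qed.
Let H_sym u v : dotv (H *m u) v = dotv u (H *m v).
Proof.
exact: (hess_wstar_sym mu_gt0 mu_le_alpha f_grad grad_hess f_sconvex f_smooth
  hess_lipschitz wstar_min).
Qed.
Let H_lower u : 4 * s ^+ 2 * alpha * dotv u u <= dotv (H *m u) u.
Proof.
rewrite -mu_eq; exact: (hess_wstar_lower mu_gt0 mu_le_alpha grad_hess f_sconvex
  f_smooth hess_lipschitz wstar_min).
Qed.
Let H_upper u : dotv (H *m u) u <= alpha * dotv u u.
Proof.
exact: (hess_wstar_upper mu_gt0 mu_le_alpha grad_hess f_sconvex f_smooth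
  hess_lipschitz wstar_min).
Qed.

Let x t := w t - wstar.
Let y t := Defs.prev wm1 w t - wstar.
Let r t := - ((1 / alpha) *: (grad (w t) - H *m x t)).
Let Q t := lyap alpha s H (x t) (y t).

Lemma heavy_ball_deviation t :
  x t.+1 = (momentum_op alpha s H (x t) - (1 - s) ^+ 2 *: y t) + r t.
Proof.
rewrite /x /y /r w_heavy_ball momentum_opE.
by set M := H *m _; set G := grad _; apply/matrixP => i j; rewrite !mxE; ring.
Qed.

(* The remainder is quadratic in the deviation: the Taylor bound at the
   minimizer, scaled by eta = 1 / alpha. *)
Lemma remainder_le t : enorm (r t) <= dotv (x t) (x t).
Proof.
rewrite /r enormN enormZ (ger0_norm (divr_ge0 ler01 (ltW alpha_pos))).
have -> : w t = wstar + x t by rewrite /x addrC subrK.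
rewrite -enorm_sq mul1r ler_pdivrMl //.
exact: (grad_taylor_wstar mu_gt0 mu_le_alpha grad_hess f_sconvex f_smooth
  hess_lipschitz wstar_min).
Qed.

Lemma lyap_level_step t : Q t <= s ^+ 6 / 64 -> Q t.+1 <= (1 - s / 2) ^+ 2 * Q t.
Proof.
move=> Qsmall; set z := momentum_op alpha s H (x t) - (1 - s) ^+ 2 *: y t.
have -> : Q t.+1 = lyap alpha s H (z + r t) (x t) by rewrite /Q heavy_ball_deviation.
have cross := lyap_cross alpha_pos s_gt0 s_le_half H_sym H_lower H_upper z (x t) (r t).
rewrite lyap_perturb !lyap_step // -/(Q t) -enorm_sq in cross *.
have Qx := lyap_lower alpha_pos s_gt0 s_le_half H_sym H_lower H_upper (x t) (y t).
apply: perturbed_contraction => //.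
- exact: lyap_ge0.
- exact: enorm_ge0.
- apply: le_trans (ler_wpM2r (sqr_ge0 _) (remainder_le t)) _.
  have := dotvv_ge0 (y t); have := dotvv_ge0 (x t); rewrite -/(Q t) in Qx; nra.
Qed.

Lemma lyap_level_le t : Q 0 <= s ^+ 6 / 64 -> Q t <= ((1 - s / 2) ^+ 2) ^+ t * Q 0.
Proof.
have rho_ge0 : 0 <= (1 - s / 2) ^+ 2 := sqr_ge0 _.
have rho_le1 : (1 - s / 2) ^+ 2 <= 1 by have := s_gt0; have := s_le_half; nra.
move=> Q0small; elim: t => [|t IH]; first by rewrite expr0 mul1r.
have Q0_ge0 : 0 <= Q 0 by apply: lyap_ge0.
have Qt_small : Q t <= s ^+ 6 / 64.
  by apply: le_trans IH (le_trans _ Q0small); rewrite ler_piMl // exprn_ile1.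
apply: le_trans (lyap_level_step Qt_small) _.
by rewrite [_ ^+ t.+1]exprS -mulrA ler_wpM2l.
Qed.

(* Squared rate, read off the equivalence of Q with the squared norm. *)
Lemma heavy_ball_rate_sq t :
  128 * enorm (col_mx (w 0%N - wstar) (wm1 - wstar)) ^+ 2 <= s ^+ 6 ->
  enorm (col_mx (w t.+1 - wstar) (w t - wstar)) ^+ 2 <=
    ((1 - s / 2) ^+ 2) ^+ t.+1 * (8 / s ^+ 2) *
      enorm (col_mx (w 0%N - wstar) (wm1 - wstar)) ^+ 2.
Proof.
set Z := enorm (col_mx _ _) ^+ 2 => Zsmall.
have Q0 : Q 0 <= 2 * Z.
  rewrite /Z enorm_col_mx !enorm_sq.
  exact: lyap_upper alpha_pos s_gt0 s_le_half H_sym H_lower H_upper _ _.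
have Qt := lyap_level_le t.+1 (le_trans Q0 _).
have Qlow := lyap_lower alpha_pos s_gt0 s_le_half H_sym H_lower H_upper (x t.+1) (y t.+1).
rewrite enorm_col_mx !enorm_sq -/(x t.+1).
set rho := ((1 - s / 2) ^+ 2) ^+ t.+1.
have rho_ge0 : 0 <= rho by rewrite exprn_ge0 ?sqr_ge0.
have s2 : 0 < s ^+ 2 by rewrite exprn_gt0.
rewrite -(ler_pM2l (_ : 0 < s ^+ 2 / 4)) ?divr_gt0 //.
apply: le_trans Qlow (le_trans (Qt _) _); first lra.
have -> : s ^+ 2 / 4 * (rho * (8 / s ^+ 2) * Z) = rho * (2 * Z) by field; rewrite gt_eqF.
by rewrite ler_wpM2l.
Qed.

Lemma heavy_ball_rate t :
  enorm (col_mx (w 0%N - wstar) (wm1 - wstar)) <= s ^+ 3 / 16 ->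
  enorm (col_mx (w t.+1 - wstar) (w t - wstar)) <=
    (1 - s / 2) ^+ t.+1 * (4 / s) * enorm (col_mx (w 0%N - wstar) (wm1 - wstar)).
Proof.
set Z := enorm (col_mx (w 0%N - wstar) (wm1 - wstar)) => Zsmall.
have Z0 : 0 <= Z := enorm_ge0 _.
have hsq : 128 * Z ^+ 2 <= s ^+ 6.
  have : Z ^+ 2 <= (s ^+ 3 / 16) ^+ 2.
    rewrite ler_sqr ?nnegrE //.
    by apply: divr_ge0 => //; apply: exprn_ge0; exact: ltW.
  have -> : (s ^+ 3 / 16) ^+ 2 = s ^+ 6 / 256 by field.
  by have := exprn_ge0 6 (ltW s_gt0); lra.
have rho0 : 0 <= 1 - s / 2 by have := s_le_half; lra.
have rate_ge0 : 0 <= (1 - s / 2) ^+ t.+1 * (4 / s) * Z.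
  apply: mulr_ge0 => //; apply: mulr_ge0; first exact: exprn_ge0.
  by apply: divr_ge0 => //; exact: ltW.
rewrite -ler_sqr ?nnegrE ?enorm_ge0 //.
apply: le_trans (heavy_ball_rate_sq t hsq) _; rewrite -/Z.
set a := ((1 - s / 2) ^+ 2) ^+ t.+1.
have a0 : 0 <= a by rewrite exprn_ge0 ?sqr_ge0.
have -> : ((1 - s / 2) ^+ t.+1 * (4 / s) * Z) ^+ 2 = 2 * (a * (8 / s ^+ 2) * Z ^+ 2).
  by rewrite /a -exprM mulnC exprM; field; rewrite gt_eqF.
have : 0 <= a * (8 / s ^+ 2) * Z ^+ 2.
  apply: mulr_ge0; last exact: sqr_ge0.
  by apply: mulr_ge0 => //; apply: divr_ge0 => //; exact: sqr_ge0.
lra.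
Qed.

End HeavyBallDynamics.

Lemma condition_number_params (R : rcfType) (mu alpha kappa s : R) :
  0 < mu -> mu <= alpha -> kappa = alpha / mu -> s = 1 / (2 * Num.sqrt kappa) ->
  [/\ 0 < s, s <= 1 / 2, mu = 4 * s ^+ 2 * alpha,
      1 / (683 * (kappa * Num.sqrt kappa)) <= s ^+ 3 / 16 &
      1 / (4 * Num.sqrt kappa) = s / 2 /\ 8 * Num.sqrt kappa = 4 / s].
Proof.
move=> mu0 mual -> ->; set sk := Num.sqrt (alpha / mu).
have k1 : 1 <= alpha / mu by rewrite ler_pdivlMr // mul1r.
have sk2 : sk ^+ 2 = alpha / mu by rewrite sqr_sqrtr // (le_trans ler01 k1).
have sk1 : 1 <= sk by have : 0 <= sk := sqrtr_ge0 _; nra.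
have sk0 : 0 < sk := lt_le_trans ltr01 sk1.
have alpha0 : 0 < alpha := lt_le_trans mu0 mual.
split.
- by rewrite divr_gt0 // mulr_gt0.
- by rewrite ler_pdivrMr ?mulr_gt0 //; lra.
- have -> : 4 * (1 / (2 * sk)) ^+ 2 * alpha = alpha / sk ^+ 2.
    by field; rewrite gt_eqF.
  by rewrite sk2; field; rewrite !gt_eqF.
- have X0 : 0 < (sk ^+ 2 * sk)^-1 by rewrite invr_gt0 mulr_gt0 ?exprn_gt0.
  rewrite -sk2.
  have -> : 1 / (683 * (sk ^+ 2 * sk)) = 1 / 683 * (sk ^+ 2 * sk)^-1.
    by field; rewrite gt_eqF.
  have -> : (1 / (2 * sk)) ^+ 3 / 16 = 1 / 128 * (sk ^+ 2 * sk)^-1.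
    by field; rewrite gt_eqF.
  by rewrite ler_pM2r //; lra.
- by split; field; rewrite gt_eqF.
Qed.

Theorem theorem8 (R : realType) (d : nat) (f : 'cV[R]_d -> R)
  (grad : 'cV[R]_d -> 'cV[R]_d) (hess : 'cV[R]_d -> 'M[R]_d)
  (mu alpha : R) (wstar wm1 : 'cV[R]_d) (w : nat -> 'cV[R]_d) :
  0 < mu -> mu <= alpha ->
  is_gradient f grad -> is_hessian grad hess ->
  strongly_convex mu f grad -> smooth alpha grad ->
  (forall u v, specnorm (hess u - hess v) <= alpha * enorm (u - v)) ->
  (forall v, f wstar <= f v) ->
  let kappa := alpha / mu in
  heavy_ball grad (1 / alpha) ((1 - 1 / (2 * Num.sqrt kappa)) ^+ 2) wm1 w ->
  enorm (col_mx (w 0%N - wstar) (wm1 - wstar)) <= 1 / (683 * (kappa * Num.sqrt kappa)) ->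
  forall t : nat,
    enorm (col_mx (w t.+1 - wstar) (w t - wstar)) <=
      (1 - 1 / (4 * Num.sqrt kappa)) ^+ t.+1 * (8 * Num.sqrt kappa) *
        enorm (col_mx (w 0%N - wstar) (wm1 - wstar)).
Proof.
move=> mu0 mual hg hh hsc hsm hlip hmin kappa hball hZ t.
pose s := 1 / (2 * Num.sqrt kappa).
have [s0 s1 mu_eq Zsmall [rate_eq transient_eq]] :=
  condition_number_params mu0 mual (erefl kappa) (erefl s).
rewrite rate_eq transient_eq.
apply: (heavy_ball_rate mu0 mual hg hh hsc hsm hlip hmin s0 s1 mu_eq hball).
exact: le_trans hZ Zsmall.
Qed.
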